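(* Fix an integer $m>1$. Let $\{z_n\}$ be generated by $\mathcal{S}(\kappa,\Phi)$ with $\kappa$ satisfying $\sum_{n}\rho^{\kappa(n)}=\infty$ for all $0<\rho\le1$ and $\Phi(x,S)=d(x,S)=\inf_{s\in S}d(x,s)$, and let $\zeta_n$ now denote the $m$ nearest neighbors prediction $\zeta_n(x)=\operatorname{mode}_f(U_{Z_n}(x))$. If $x\in\operatorname{supp}(\mu)$ is not an $f$-boundary point, then $\zeta_n(x)\to f(x)$ with probability one.
   Context: $(X,d)$ metric space with probability measure $\mu$; $Y$ countable; $f:X\to Y$; $X_y=f^{-1}(y)$; $B_\epsilon(x)$ open ball; $\operatorname{supp}(\mu)=\{x:\mu(B_\epsilon(x))>0\ \forall\epsilon>0\}$. $b$ is an $f$-boundary point iff $\mu(B_\epsilon(b)\setminus X_{f(b)})>0$ for all $\epsilon>0$. Process $\mathcal{S}(\kappa,\Phi)$: $Z_0=\emptyset$; at step $n$ draw $\kappa(n)$ candidates i.i.d. from $\mu$, independent of the past; $z_n$ maximizes $\Phi(\cdot,Z_{n-1})$ over candidates (ties uniformly at random); $Z_n=\{z_1,\dots,z_n\}$. For finite $A$, $\operatorname{modefreq}_f(A)=\max_y|A\cap X_y|$ and $\operatorname{mode}_f(A)$ is a value $y$ attaining this maximum (ties uniformly at random). $m$ nearest neighbors: for $S\subseteq X$ let $\mathcal{U}_x$ be the family of $m$-element subsets of $S$ minimizing distance to $x$; $U_S(x)=\{x\}$ if $x\in S$, otherwise $U_S(x)=\arg\min_{U\in\mathcal{U}_x}\operatorname{modefreq}_f(U)$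 (for $n<m$, use all of $Z_n$). *)

From HB Require Import structures.
From mathcomp Require Import all_boot all_order all_algebra.
From mathcomp Require Import all_classical all_reals all_analysis.
Set Implicit Arguments. Unset Strict Implicit. Unset Printing Implicit Defensive.
Import Order.TTheory GRing.Theory Num.Theory.
Local Open Scope classical_set_scope.
Local Open Scope ring_scope.

Section Defs.
Context {R : realType}.

Definition is_metric {X : Type} (dist : X -> X -> R) : Prop :=
  (forall x y, 0 <= dist x y) /\ (forall x y, dist x y = 0 <-> x = y) /\
  (forall x y, dist x y = dist y x) /\
  (forall x y z, dist x z <= dist x y + dist y z).

Definition oball {X : Type} (dist : X -> X -> R) (x : X) (eps : R) : set X :=
  [set y | dist x y < eps].

(* d(x,S) = inf_{s in S} d(x,s), as an extended real (= +oo for S empty) *)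
Definition dist_set {X : Type} (dist : X -> X -> R) (x : X) (S : set X) : \bar R :=
  ereal_inf [set (dist x s)%:E | s in S].

Definition in_supp {dX} {X : measurableType dX} (dist : X -> X -> R)
    (mu : set X -> \bar R) (x : X) : Prop :=
  forall eps : R, 0 < eps -> (0 < mu (oball dist x eps))%E.

Definition f_boundary {dX} {X : measurableType dX} {Y : Type} (dist : X -> X -> R)
    (mu : set X -> \bar R) (f : X -> Y) (b : X) : Prop :=
  forall eps : R, 0 < eps ->
    (0 < mu (oball dist b eps `\` (f @^-1` [set f b])))%E.

Definition iid_family {dO dX} {Omega : measurableType dO} {X : measurableType dX}
    {I : eqType} (P : probability Omega R) (J : set I) (c : I -> Omega -> X)
    (mu : probability X R) : Prop :=
  (forall i, J i -> measurable_fun setT (c i)) /\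
  (forall i A, J i -> measurable A -> P (c i @^-1` A) = mu A) /\
  (forall (F : seq I) (A : I -> set X), uniq F -> (forall i, i \in F -> J i) ->
     (forall i, measurable (A i)) ->
     P (\big[setI/setT]_(i <- F) (c i @^-1` A i)) =
     (\big[*%E/1%E]_(i <- F) P (c i @^-1` A i))%E).

(* The process S(kappa, Phi) with Phi(x,S) = d(x,S): at step n >= 1 the
   candidates are cand (n, j), j < kappa n, and z n is a maximizer of
   d(., Z_{n-1}) among them (ties broken by an arbitrary rule). *)
Definition Zset {Omega X : Type} (z : nat -> Omega -> X) (n : nat) (w : Omega) : set X :=
  [set z k w | k in [set k | (1 <= k <= n)%N]].

Definition farthest_process {Omega X : Type} (dist : X -> X -> R) (kappa : nat -> nat)
    (cand : nat * nat -> Omega -> X) (z : nat -> Omega -> X) : Prop :=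
  forall (n : nat) (w : Omega), (1 <= n)%N ->
    (exists2 j, (j < kappa n)%N & z n w = cand (n, j) w) /\
    (forall j, (j < kappa n)%N ->
       (dist_set dist (cand (n, j) w) (Zset z n.-1 w)
         <= dist_set dist (z n w) (Zset z n.-1 w))%E).

Definition Zseq {Omega X : Type} (z : nat -> Omega -> X) (n : nat) (w : Omega) : seq X :=
  [seq z k w | k <- iota 1 n].

(* modefreq_f(A) = max_y |A cap X_y| for a duplicate-free list A *)
Definition modefreq {X Y : eqType} (f : X -> Y) (A : seq X) : nat :=
  \max_(a <- A) count (fun v => f v == f a) A.

Definition is_mode {X Y : eqType} (f : X -> Y) (A : seq X) (y : Y) : Prop :=
  count (fun v => f v == y) A = modefreq f A.

Definition msubset {X : eqType} (m : nat) (S U : seq X) : Prop :=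
  [/\ uniq U, size U = m & {subset U <= S}].

Definition nn_family {X : eqType} (dist : X -> X -> R) (m : nat) (S : seq X)
    (x : X) (U : seq X) : Prop :=
  if (size (undup S) < m)%N then uniq U /\ U =i S
  else msubset m S U /\
       (forall V, msubset m S V -> \sum_(u <- U) dist x u <= \sum_(v <- V) dist x v).

Definition nn_choice {X Y : eqType} (dist : X -> X -> R) (f : X -> Y) (m : nat)
    (S : seq X) (x : X) (U : seq X) : Prop :=
  if x \in S then U = [:: x]
  else nn_family dist m S x U /\
       (forall V, nn_family dist m S x V -> (modefreq f U <= modefreq f V)%N).

End Defs.

From HB Require Import structures.
From mathcomp Require Import all_boot all_order all_algebra.
From mathcomp Require Import all_classical all_reals all_analysis.
From mathcomp Require Import ring lra.

Set Implicit Arguments.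
Unset Strict Implicit.
Unset Printing Implicit Defensive.
Import Order.TTheory GRing.Theory Num.Theory.
Local Open Scope classical_set_scope.
Local Open Scope ring_scope.

(* Only the fact that z_n is one of the kappa(n) candidates drawn at step n is
   used, not the farthest-point rule.  For a ball B around x, of measure p > 0,
   the events "every candidate of step n lies in B" are independent with
   probabilities p^kappa(n), whose sum diverges; hence almost surely one of
   them occurs, for every ball B_{1/(k+1)}(x) at once, and x is a limit point
   of (z_n).  Since x is not an f-boundary point, some ball B_eps(x) meets
   the other classes in a null set, which almost surely no candidate ever
   hits.  Once m distinct samples lie in B_eps(x), an exchange argument puts
   all m nearest neighbours of x in B_eps(x); they all have label f(x), and
   so has their mode. *)

Lemma prod_1subr_mul_1addr_sum_le1 (R : realDomainType) (I : Type) (q : I -> R)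
    (s : seq I) :
  (forall i, 0 <= q i <= 1) ->
  (\prod_(i <- s) (1 - q i)) * (1 + \sum_(i <- s) q i) <= 1.
Proof.
move=> q01; elim: s => [|a s IH]; first by rewrite !big_nil; lra.
have /andP[qa_ge0 qa_le1] := q01 a.
have p_ge0 : 0 <= \prod_(i <- s) (1 - q i).
  by apply: prodr_ge0 => i _; have /andP[_] := q01 i; lra.
have p_le1 : \prod_(i <- s) (1 - q i) <= 1.
  by apply: prodr_ile1 => i _; have /andP[] := q01 i; lra.
have S_ge0 : 0 <= \sum_(i <- s) q i by apply: sumr_ge0 => i _; have /andP[] := q01 i.
rewrite !big_cons; move: IH p_ge0 p_le1 S_ge0.
set p := \prod_(_ <- _) _; set S := \sum_(_ <- _) _ => IH *.
have -> : (1 - q a) * p * (1 + (q a + S)) = (1 - q a) * (p * (1 + S) + q a * p) by ring.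
nra.
Qed.

Lemma probability_setD (R : realType) (d : measure_display) (T : measurableType d)
    (P : probability T R) (A B : set T) :
  measurable A -> measurable B -> P (A `\` B) = (P A - P (A `&` B))%E.
Proof.
move=> mA mB; apply: measureD => //.
by rewrite (le_lt_trans (probability_le1 P mA)) ?ltey.
Qed.

Section iid_candidates.
Variables (R : realType) (dO dX : measure_display).
Variables (Omega : measurableType dO) (X : measurableType dX).
Variables (P : probability Omega R) (mu : probability X R).
Variables (kappa : nat -> nat) (cand : nat * nat -> Omega -> X).
Hypothesis cand_iid :
  iid_family P [set ij | (1 <= ij.1)%N /\ (ij.2 < kappa ij.1)%N] cand mu.
Hypothesis kappa_diverges : forall rho : R, 0 < rho <= 1 ->
  (fun N => \sum_(1 <= n < N) rho ^+ kappa n) @ \oo --> +oo.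

Definition cands_in (B : set X) (n : nat) : set Omega :=
  \big[setI/setT]_(j <- iota 0 (kappa n)) (cand (n, j) @^-1` B).

Lemma cands_inP B n w :
  cands_in B n w <-> forall j, (j < kappa n)%N -> B (cand (n, j) w).
Proof.
rewrite /cands_in -bigcap_seq; split => [inB j jk|inB j].
  by apply: inB; rewrite /= mem_iota.
by rewrite /= mem_iota => /andP[_ jk]; apply: inB.
Qed.

Definition cand_indices (s : seq nat) : seq (nat * nat) :=
  [seq (n, j) | n <- s, j <- iota 0 (kappa n)].

Lemma cand_indicesP s i :
  i \in cand_indices s -> i.1 \in s /\ (i.2 < kappa i.1)%N.
Proof.
by case/allpairsPdep => n [j [ns]]; rewrite mem_iota => /andP[_ jk] ->.
Qed.

Lemma cand_indices_uniq s : uniq s -> uniq (cand_indices s).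
Proof.
elim: s => [//|a s IH] /= /andP[as_ us]; rewrite cat_uniq IH // andbT.
rewrite map_inj_uniq ?iota_uniq => [|j1 j2 [] //]; apply/hasPn => i /cand_indicesP[ins _].
by apply/mapP => -[j _ ia]; move: ins; rewrite ia (negbTE as_).
Qed.

Lemma bigcap_cand_indices B s :
  \big[setI/setT]_(i <- cand_indices s) (cand i @^-1` B) =
  \big[setI/setT]_(n <- s) cands_in B n.
Proof. exact: big_allpairs_dep. Qed.

Lemma measurable_cand_preimage n j B :
  (0 < n)%N -> (j < kappa n)%N -> measurable B -> measurable (cand (n, j) @^-1` B).
Proof.
move: cand_iid => [cand_meas _] n_gt0 jk mB.
by rewrite -[X in measurable X]setTI; apply: (cand_meas (n, j)).
Qed.

Lemma measurable_cands_in B n :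
  measurable B -> (0 < n)%N -> measurable (cands_in B n).
Proof.
move=> mB n_gt0; rewrite /cands_in big_seq; apply: bigsetI_measurable => j.
by rewrite mem_iota => /andP[_ jk]; exact: measurable_cand_preimage.
Qed.

Lemma measurable_never_cands_in B :
  measurable B -> measurable (\bigcap_(n in [set n | (0 < n)%N]) ~` cands_in B n).
Proof.
by move=> mB; apply: bigcap_measurableType => n n_gt0; exact/measurableC/measurable_cands_in.
Qed.

Lemma measure_bigcap_cands_in B s :
  measurable B -> uniq s -> {in s, forall n, (0 < n)%N} ->
  P (\big[setI/setT]_(n <- s) cands_in B n) =
  (\prod_(n <- s) fine (mu B) ^+ kappa n)%:E.
Proof.
move: cand_iid => [_ [cand_law cand_indep]] mB us s_gt0.
rewrite -bigcap_cand_indices cand_indep //; last 2 first.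
- exact: cand_indices_uniq.
- by move=> i /cand_indicesP[/s_gt0 i1 i2].
rewrite big_allpairs_dep -prodEFin; apply: eq_big_seq => n /s_gt0 n_gt0.
rewrite (eq_big_seq (fun=> (fine (mu B))%:E)); last first.
  move=> j; rewrite mem_iota => /andP[_ jk].
  by rewrite cand_law //= fineK ?fin_num_measure.
by rewrite prodEFin -{1}(subn0 (kappa n)) prodr_const_nat subn0.
Qed.

Lemma measure_bigcap_cands_in_notin B G F :
  measurable B -> uniq (G ++ F) -> {in G ++ F, forall n, (0 < n)%N} ->
  P (\big[setI/setT]_(n <- G) cands_in B n `&`
     \big[setI/setT]_(n <- F) ~` cands_in B n) =
  ((\prod_(n <- G) fine (mu B) ^+ kappa n) *
   \prod_(n <- F) (1 - fine (mu B) ^+ kappa n))%:E.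
Proof.
move=> mB; elim: F G => [|a F IH] G.
  by rewrite cats0 !big_nil setIT mulr1 => ?; apply: measure_bigcap_cands_in.
move=> uGaF GaF_gt0.
have perm_aGF : perm_eq ((a :: G) ++ F) (G ++ a :: F).
  by apply/permPl; exact: perm_catCA [:: a] G F.
have aGF_gt0 : {in (a :: G) ++ F, forall n, (0 < n)%N}.
  by move=> n; rewrite (perm_mem perm_aGF); apply: GaF_gt0.
have a_gt0 : (0 < a)%N by apply: aGF_gt0; rewrite mem_head.
have uaGF : uniq ((a :: G) ++ F) by rewrite (perm_uniq perm_aGF).
have uGF : uniq (G ++ F) by case/andP: uaGF.
have GF_gt0 : {in G ++ F, forall n, (0 < n)%N}.
  by move=> n nGF; apply: aGF_gt0; rewrite /= inE nGF orbT.
have mE : measurable (\big[setI/setT]_(n <- G) cands_in B n `&`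
                      \big[setI/setT]_(n <- F) ~` cands_in B n).
  apply: measurableI; rewrite big_seq; apply: bigsetI_measurable => n nX;
    [|apply: measurableC]; apply: measurable_cands_in => //;
    by apply: GF_gt0; rewrite mem_cat nX ?orbT.
rewrite big_cons setIA setIAC -setDE.
rewrite (probability_setD P mE (measurable_cands_in mB a_gt0)).
rewrite setIAC (setIC _ (cands_in B a)).
have <- : \big[setI/setT]_(n <- a :: G) cands_in B n =
          cands_in B a `&` \big[setI/setT]_(n <- G) cands_in B n by rewrite big_cons.
rewrite !IH // -EFinB !big_cons.
by congr (_%:E); ring.
Qed.

Lemma never_cands_in_null B :
  measurable B -> 0 < fine (mu B) ->
  P (\bigcap_(n in [set n | (0 < n)%N]) ~` cands_in B n) = 0%E.
Proof.
move=> mB p_gt0; set p := fine (mu B); set E := \bigcap_(n in _) _.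
have p01 : 0 < p <= 1.
  by rewrite p_gt0 -lee_fin fineK ?fin_num_measure //; exact: probability_le1.
have pk01 n : 0 <= p ^+ kappa n <= 1.
  by case/andP: p01 => _ p_le1; rewrite exprn_ge0 ?exprn_ile1 // ltW.
have mE : measurable E by exact: measurable_never_cands_in.
have PE_ge0 : 0 <= fine (P E) by rewrite fine_ge0.
(* P(E) <= prod_(n < N) (1 - p^kappa n) <= 1 / (1 + sum_(n < N) p^kappa n) *)
have PE_bound N : fine (P E) * (1 + \sum_(1 <= n < N) p ^+ kappa n) <= 1.
  apply: le_trans (prod_1subr_mul_1addr_sum_le1 _ pk01).
  apply: ler_wpM2r; first by rewrite addr_ge0 ?sumr_ge0 // => n _; case/andP: (pk01 n).
  have mF : measurable (\big[setI/setT]_(n <- index_iota 1 N) ~` cands_in B n).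
    rewrite big_seq; apply: bigsetI_measurable => n.
    by rewrite mem_index_iota => /andP[n_gt0 _]; exact/measurableC/measurable_cands_in.
  have := @measure_bigcap_cands_in_notin B [::] (index_iota 1 N) mB (iota_uniq _ _).
  rewrite !big_nil setTI mul1r -lee_fin fineK ?fin_num_measure // => <-; last first.
    by move=> n; rewrite mem_index_iota => /andP[].
  apply: le_measure; rewrite ?inE //.
  by move=> w Ew; rewrite -bigcap_seq => n /=; rewrite mem_index_iota => /andP[/Ew].
have PE_le0 : fine (P E) <= 0.
  rewrite leNgt; apply/negP => PE_gt0.
  have /cvgryPger /(_ (fine (P E))^-1 (num_real _)) [N _ /(_ N (leqnn N))] :=
    kappa_diverges p01.
  rewrite /= -(ler_pM2l PE_gt0) mulfV ?gt_eqF // => sum_large.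
  by have := PE_bound N; rewrite mulrDr mulr1; lra.
by rewrite -[P E]fineK ?fin_num_measure //; congr (_%:E); apply: le_anti; rewrite PE_le0.
Qed.

Lemma ae_some_step_cands_in B :
  measurable B -> (0 < mu B)%E ->
  {ae P, forall w, exists2 n, (0 < n)%N & cands_in B n w}.
Proof.
move=> mB muB_gt0.
exists (\bigcap_(n in [set n | (0 < n)%N]) ~` cands_in B n); split.
- exact: measurable_never_cands_in.
- apply: never_cands_in_null => //; rewrite fine_gt0 // muB_gt0 /=.
  by rewrite (le_lt_trans (probability_le1 mu mB)) ?ltey.
- by move=> w /= no_step n n_gt0 inB; apply: no_step; exists n.
Qed.

Lemma ae_cands_notin_null D :
  measurable D -> mu D = 0 ->
  {ae P, forall w n j, (0 < n)%N -> (j < kappa n)%N -> ~ D (cand (n, j) w)}.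
Proof.
move: cand_iid => [_ [cand_law _]] mD muD0.
apply: ae_foralln => n; apply: ae_foralln => j.
have [/andP[n_gt0 jk]|ij_out] := boolP ((0 < n)%N && (j < kappa n)%N); last first.
  by apply: aeW => w n_gt0 jk; move: ij_out; rewrite n_gt0 jk.
exists (cand (n, j) @^-1` D); split.
- exact: measurable_cand_preimage.
- by rewrite -muD0; exact: cand_law.
- by move=> w /= inD; apply: contrapT => notD; apply: inD => _ _.
Qed.

Lemma ae_cands_approach (dist : X -> X -> R) x :
  (forall c eps, measurable (oball dist c eps)) -> in_supp dist mu x ->
  {ae P, forall w r, 0 < r -> exists2 n, (0 < n)%N &
     forall j, (j < kappa n)%N -> dist x (cand (n, j) w) < r}.
Proof.
move=> mball x_supp.
have : {ae P, forall w k, exists2 n, (0 < n)%N & cands_in (oball dist x k.+1%:R^-1) n w}.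
  apply: ae_foralln => k; apply: ae_some_step_cands_in => //.
  by apply: x_supp; rewrite invr_gt0.
apply: filterS => w approach r r_gt0.
have [k _ /(_ k (leqnn k)) kr] := near_infty_natSinv_lt (PosNum r_gt0).
have [n n_gt0 /cands_inP inB] := approach k.
by exists n => // j /inB /lt_trans; apply.
Qed.

End iid_candidates.

Lemma is_mode_const (X Y : eqType) (f : X -> Y) (U : seq X) y0 y :
  U != [::] -> {in U, forall u, f u = y0} -> is_mode f U y -> y = y0.
Proof.
case: U => [//|u0 U] _ fU; rewrite /is_mode => mode_y.
have all_u0 : count (fun v => f v == f u0) (u0 :: U) = size (u0 :: U).
  by apply/eqP; rewrite -all_count; apply/allP => v /fU ->; rewrite fU ?mem_head.
have : (size (u0 :: U) <= modefreq f (u0 :: U))%N.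
  rewrite -{1}all_u0; exact: (leq_bigmax_seq
    (F := fun a => count (fun v => f v == f a) (u0 :: U)) u0 (mem_head _ _) isT).
rewrite -mode_y => size_le.
have /allP /(_ u0 (mem_head _ _)) /eqP <- : all (fun v => f v == y) (u0 :: U).
  by rewrite all_count eqn_leq count_size size_le.
exact/fU/mem_head.
Qed.

Lemma nn_choice_mem_mode (R : realType) (X Y : eqType) (dist : X -> X -> R)
    (f : X -> Y) m S x U y :
  x \in S -> nn_choice dist f m S x U -> is_mode f U y -> y = f x.
Proof.
by rewrite /nn_choice => -> ->; apply: is_mode_const => // u; rewrite inE => /eqP->.
Qed.

Lemma nn_family_near (R : realType) (X : eqType) (dist : X -> X -> R) m S x eps W U :
  (0 < m)%N -> uniq W -> size W = m -> {subset W <= S} ->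
  {in W, forall u, dist x u < eps} ->
  nn_family dist m S x U -> msubset m S U /\ {in U, forall u, dist x u < eps}.
Proof.
move=> m_gt0 uW sW WS W_near; rewrite /nn_family.
have -> : (size (undup S) < m)%N = false.
  by apply/negbTE; rewrite -leqNgt -sW uniq_leq_size // => u /WS; rewrite mem_undup.
move=> [[uU sU US] U_min]; split => // u uUu; rewrite ltNge; apply/negP => u_far.
have [w wW wU] : exists2 w, w \in W & w \notin U.
  apply/allPn; apply/negP => /allP W_U.
  have : {subset W <= rem u U}.
    move=> w wW; rewrite (mem_rem_uniq u uU) inE /= W_U // andbT.
    by apply: contraTneq (W_near w wW) => ->; rewrite -leNgt.
  move/(uniq_leq_size uW); rewrite size_rem // sU sW.
  by case: (m) m_gt0 => // k _; rewrite ltnn.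
have V_sub : msubset m S (w :: rem u U).
  split.
  - by rewrite /= rem_uniq // andbT; apply: contra wU => /mem_rem.
  - by rewrite /= size_rem // sU prednK.
  - by move=> v; rewrite inE => /orP[/eqP-> | /mem_rem]; [exact: WS | exact: US].
have := U_min _ V_sub.
rewrite (perm_big _ (perm_to_rem uUu)) !big_cons /=.
by have := W_near w wW; lra.
Qed.

Lemma nn_choice_mode (R : realType) (X Y : eqType) (dist : X -> X -> R) (f : X -> Y)
    m S x eps W U y :
  (0 < m)%N -> uniq W -> size W = m -> {subset W <= S} ->
  {in W, forall u, dist x u < eps} -> {in S, forall u, dist x u < eps -> f u = f x} ->
  nn_choice dist f m S x U -> is_mode f U y -> y = f x.
Proof.
move=> m_gt0 uW sW WS W_near S_label; have [xS|xNS] := boolP (x \in S).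
  exact: nn_choice_mem_mode.
rewrite /nn_choice (negbTE xNS) => -[/(nn_family_near m_gt0 uW sW WS W_near)].
move=> [[_ sU US] U_near] _; apply: is_mode_const => [|u uU].
  by rewrite -size_eq0 sU -lt0n.
by apply: S_label; [exact: US | exact: U_near].
Qed.

Lemma exists_pos_lower_bound (R : realDomainType) (T : eqType) (g : T -> R) (s : seq T) e :
  0 < e -> {in s, forall u, 0 < g u} ->
  exists2 r, 0 < r <= e & {in s, forall u, r <= g u}.
Proof.
move=> e_gt0; elim: s => [|a s IH] g_gt0; first by exists e; rewrite ?e_gt0 ?lexx.
have [u us|r /andP[r_gt0 r_le] r_low] := IH; first by apply: g_gt0; rewrite inE us orbT.
exists (Num.min r (g a)).
  by rewrite lt_min r_gt0 g_gt0 ?mem_head // ge_min r_le.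
by move=> u; rewrite inE => /predU1P[-> | /r_low]; rewrite ge_min ?lexx ?orbT // => ->.
Qed.

Section sample_prefixes.
Variables (Omega : Type) (X : eqType) (z : nat -> Omega -> X) (w : Omega).

Lemma mem_Zseq n k : (0 < k <= n)%N -> z k w \in Zseq z n w.
Proof. by move=> kn; apply: map_f; rewrite mem_iota add1n ltnS. Qed.

Lemma ZseqP n u : u \in Zseq z n w -> exists2 k, (0 < k <= n)%N & u = z k w.
Proof. by case/mapP => k; rewrite mem_iota add1n ltnS; exists k. Qed.

Lemma Zseq_subset N n : (N <= n)%N -> {subset Zseq z N w <= Zseq z n w}.
Proof.
move=> Nn u /ZseqP[k /andP[k_gt0 kN] ->].
by apply: mem_Zseq; rewrite k_gt0 (leq_trans kN Nn).
Qed.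

End sample_prefixes.

Lemma exists_uniq_near_points (R : realType) (Omega : Type) (X : eqType)
    (dist : X -> X -> R) (z : nat -> Omega -> X) w x eps c :
  is_metric dist -> 0 < eps ->
  (forall r, 0 < r -> exists2 n, (0 < n)%N & dist x (z n w) < r) ->
  (forall n, (0 < n)%N -> z n w != x) ->
  exists N (W : seq X), [/\ uniq W, size W = c, {subset W <= Zseq z N w} &
                           {in W, forall u, dist x u < eps}].
Proof.
move=> [dist_ge0 [dist_eq0 _]] eps_gt0 approach z_neq.
elim: c => [|c [N [W [uW sW WZ W_near]]]]; first by exists 0%N, [::].
have W_pos : {in W, forall u, 0 < dist x u}.
  move=> u /WZ uZ; case: (ZseqP uZ) => k /andP[k_gt0 _] ->.
  rewrite lt_def dist_ge0 andbT.
  by apply: contraNneq (z_neq k k_gt0) => /dist_eq0 <-.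
have [r /andP[r_gt0 r_le] r_low] := exists_pos_lower_bound eps_gt0 W_pos.
have [n n_gt0 zn_near] := approach r r_gt0.
exists (maxn N n), (z n w :: W); split.
- by rewrite /= uW andbT; apply/negP => /r_low; rewrite leNgt zn_near.
- by rewrite /= sW.
- move=> u; rewrite inE => /predU1P[-> | /WZ].
    by apply: mem_Zseq; rewrite n_gt0 leq_maxr.
  by apply: Zseq_subset; exact: leq_maxl.
- by move=> u; rewrite inE => /predU1P[-> | /W_near //]; exact: lt_le_trans zn_near r_le.
Qed.

Lemma nn_mode_eventually (R : realType) (Omega : Type) (X Y : eqType)
    (dist : X -> X -> R) (f : X -> Y) m (z : nat -> Omega -> X) w x eps :
  is_metric dist -> (0 < m)%N -> 0 < eps ->
  (forall r, 0 < r -> exists2 n, (0 < n)%N & dist x (z n w) < r) ->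
  (forall n, (0 < n)%N -> dist x (z n w) < eps -> f (z n w) = f x) ->
  exists N, forall n, (N <= n)%N -> forall U, nn_choice dist f m (Zseq z n w) x U ->
    forall y, is_mode f U y -> y = f x.
Proof.
move=> metric m_gt0 eps_gt0 approach label.
have [[n0 n0_gt0 zx] | not_hit] := pselect (exists2 n, (0 < n)%N & z n w = x).
  exists n0 => n n0n U U_nn y; apply: nn_choice_mem_mode U_nn.
  by rewrite -zx mem_Zseq // n0_gt0.
have z_neq n : (0 < n)%N -> z n w != x.
  by move=> n_gt0; apply/eqP => zx; apply: not_hit; exists n.
have [N [W [uW sW WZ W_near]]] :=
  exists_uniq_near_points m metric eps_gt0 approach z_neq.
exists N => n Nn U U_nn y; apply: (nn_choice_mode m_gt0 uW sW _ W_near _ U_nn).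
  by move=> u /WZ; apply: Zseq_subset.
by move=> u uZ; case: (ZseqP uZ) => k /andP[k_gt0 _] ->; exact: label.
Qed.

Theorem mainTheorem11 (R : realType)
  (dX : measure_display) (X : measurableType dX) (dist : X -> X -> R)
  (mu : probability X R) (Y : countType) (f : X -> Y)
  (dO : measure_display) (Omega : measurableType dO) (P : probability Omega R)
  (m : nat) (kappa : nat -> nat)
  (cand : nat * nat -> Omega -> X) (z : nat -> Omega -> X) (x : X) :
  (1 < m)%N ->
  is_metric dist ->
  (forall (c : X) (eps : R), measurable (oball dist c eps)) ->
  (forall y : Y, measurable (f @^-1` [set y])) ->
  (forall n, (1 <= n)%N -> (0 < kappa n)%N) ->
  (forall rho : R, 0 < rho <= 1 ->
     (fun N => \sum_(1 <= n < N) rho ^+ kappa n) @ \oo --> +oo) ->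
  iid_family P [set ij | (1 <= ij.1)%N /\ (ij.2 < kappa ij.1)%N] cand mu ->
  farthest_process dist kappa cand z ->
  in_supp dist mu x ->
  ~ f_boundary dist mu f x ->
  {ae P, forall w, exists N, forall n, (N <= n)%N ->
     forall U, nn_choice dist f m (Zseq z n w) x U ->
     forall y, is_mode f U y -> y = f x}.
Proof.
move=> m_gt1 metric mball mfiber _ diverge iid farthest x_supp not_boundary.
have [eps eps_gt0 null_D] :
    exists2 eps, 0 < eps & mu (oball dist x eps `\` f @^-1` [set f x]) = 0%E.
  move/existsNP: not_boundary => [eps /not_implyP[eps_gt0 /negP]].
  by rewrite -leNgt le_eqVlt ltNge measure_ge0 orbF => /eqP; exists eps.
have mD : measurable (oball dist x eps `\` f @^-1` [set f x]) by apply: measurableD.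
apply: filterS2 (ae_cands_notin_null iid mD null_D)
  (ae_cands_approach iid diverge mball x_supp).
move=> w avoid approach; have z_cand n n_gt0 := (farthest n w n_gt0).1.
apply: (nn_mode_eventually metric (ltnW m_gt1) eps_gt0) => [r r_gt0 | n n_gt0 zn_near].
  have [n n_gt0 near] := approach r r_gt0; exists n => //.
  by have [j jk ->] := z_cand n n_gt0; exact: near.
apply: contrapT => zn_label; have [j jk zj] := z_cand n n_gt0.
by apply: (avoid n j n_gt0 jk); rewrite -zj.
Qed.
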